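(* Let $X_f,Y_f,Z_f\subset\mathbb{R}$, $D_f=X_f\times Y_f\times Z_f$, and let $f:D_f\to\mathbb{R}$ be a bounded function. (i) If $\mathrm{F\text{-}rank}[f]=(r_1,r_2,r_3)$ (with $r_1,r_2,r_3$ finite), then there exist a tensor $\mathcal{C}\in\mathbb{R}^{r_1\times r_2\times r_3}$ and bounded functions $f_x:X_f\to\mathbb{R}^{r_1}$, $f_y:Y_f\to\mathbb{R}^{r_2}$, $f_z:Z_f\to\mathbb{R}^{r_3}$ such that for all $(v_1,v_2,v_3)\in D_f$, $f(v_1,v_2,v_3)=\mathcal{C}\times_1 f_x(v_1)\times_2 f_y(v_2)\times_3 f_z(v_3)$. (ii) Conversely, let $\mathcal{C}\in\mathbb{R}^{r_1\times r_2\times r_3}$ be an arbitrary tensor, let $X_g,Y_g,Z_g\subset\mathbb{R}$, and let $g_x:X_g\to\mathbb{R}^{r_1}$, $g_y:Y_g\to\mathbb{R}^{r_2}$, $g_z:Z_g\to\mathbb{R}^{r_3}$ be arbitrary bounded functions. Define $g:X_g\times Y_g\times Z_g\to\mathbb{R}$ by $g(v_1,v_2,v_3)=\mathcal{C}\times_1 g_x(v_1)\times_2 g_y(v_2)\times_3 g_z(v_3)$. Then $(\mathrm{F\text{-}rank}[g])_{(i)}\le r_i$ for $i=1,2,3$.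
   Context: For $\mathcal{C}\in\mathbb{R}^{r_1\times r_2\times r_3}$ and vectors $\mathbf{a}\in\mathbb{R}^{r_1},\mathbf{b}\in\mathbb{R}^{r_2},\mathbf{c}\in\mathbb{R}^{r_3}$ (viewed as $1\times r_i$ matrices in the mode-$i$ products $\mathcal{X}\times_i\mathbf{A}:=\mathrm{fold}_i(\mathbf{A}\mathbf{X}^{(i)})$), one has $\mathcal{C}\times_1\mathbf{a}\times_2\mathbf{b}\times_3\mathbf{c}=\sum_{i,j,k}\mathcal{C}_{(i,j,k)}\mathbf{a}_{(i)}\mathbf{b}_{(j)}\mathbf{c}_{(k)}$. For a tensor $\mathcal{T}\in\mathbb{R}^{n_1\times n_2\times n_3}$, $\mathbf{T}^{(i)}$ denotes its mode-$i$ unfolding matrix (columns are the mode-$i$ fibers). For a function $h:X\times Y\times Z\to\mathbb{R}$ with $X,Y,Z\subset\mathbb{R}$, the sampled tensor set is $S[h]=\{\mathcal{T}\in\mathbb{R}^{n_1\times n_2\times n_3}: n_1,n_2,n_3\in\mathbb{N}_+,\ \exists\,\mathbf{x}\in X^{n_1},\mathbf{y}\in Y^{n_2},\mathbf{z}\in Z^{n_3}\text{ with }\mathcal{T}_{(i,j,k)}=h(\mathbf{x}_{(i)},\mathbf{y}_{(j)},\mathbf{z}_{(k)})\ \forall i,j,k\}$, and the function rank is $\mathrm{F\text{-}rank}[h]=(r_1,r_2,r_3)$ with $r_i=\sup_{\mathcal{T}\in S[h]}\mathrm{rank}(\mathbf{T}^{(i)})$; $(\mathrm{F\text{-}rank}[h])_{(i)}$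 denotes its $i$-th entry. *)

From HB Require Import structures.
From mathcomp Require Import all_boot all_order all_algebra.
From mathcomp Require Import classical_sets reals.
Set Implicit Arguments. Unset Strict Implicit. Unset Printing Implicit Defensive.
Import Order.TTheory GRing.Theory Num.Theory.
Local Open Scope ring_scope.

Definition tensor (R : Type) (n1 n2 n3 : nat) := 'I_n1 -> 'I_n2 -> 'I_n3 -> R.

(* Mode-i unfoldings: row index is the mode-i index, each row lists (via
   mxvec) all entries with that mode-i index; columns are the mode-i fibers
   (in some fixed order, which does not affect the rank). *)
Definition unfold1 (R : Type) n1 n2 n3 (T : tensor R n1 n2 n3) : 'M[R]_(n1, n2 * n3) :=
  \matrix_(i < n1) mxvec (\matrix_(j < n2, k < n3) T i j k).
Definition unfold2 (R : Type) n1 n2 n3 (T : tensor R n1 n2 n3) : 'M[R]_(n2, n1 * n3) :=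
  \matrix_(j < n2) mxvec (\matrix_(i < n1, k < n3) T i j k).
Definition unfold3 (R : Type) n1 n2 n3 (T : tensor R n1 n2 n3) : 'M[R]_(n3, n1 * n2) :=
  \matrix_(k < n3) mxvec (\matrix_(i < n1, j < n2) T i j k).

(* rank of the mode-m unfolding (m = 1,2,3; any other m is treated as 3) *)
Definition mode_rank (R : fieldType) (m : nat) n1 n2 n3 (T : tensor R n1 n2 n3) : nat :=
  match m with
  | 1%N => \rank (unfold1 T)
  | 2%N => \rank (unfold2 T)
  | _ => \rank (unfold3 T)
  end.

(* C x_1 a x_2 b x_3 c = sum_{i,j,k} C(i,j,k) a(i) b(j) c(k) *)
Definition ttm3 (R : comNzRingType) r1 r2 r3 (C : tensor R r1 r2 r3)
  (a : 'rV[R]_r1) (b : 'rV[R]_r2) (c : 'rV[R]_r3) : R :=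
  \sum_(i < r1) \sum_(j < r2) \sum_(k < r3) C i j k * a 0 i * b 0 j * c 0 k.

Definition sampled (R : Type) (h : R -> R -> R -> R) (X Y Z : set R)
  n1 n2 n3 (T : tensor R n1 n2 n3) : Prop :=
  [/\ (0 < n1)%N, (0 < n2)%N, (0 < n3)%N &
   exists (x : 'I_n1 -> R) (y : 'I_n2 -> R) (z : 'I_n3 -> R),
     [/\ forall i, X (x i), forall j, Y (y j), forall k, Z (z k) &
         forall i j k, T i j k = h (x i) (y j) (z k)]].

Definition Frank_le (R : fieldType) (h : R -> R -> R -> R) (X Y Z : set R)
  (m : nat) (r : nat) : Prop :=
  forall n1 n2 n3 (T : tensor R n1 n2 n3), sampled h X Y Z T -> (mode_rank m T <= r)%N.

(* (F-rank[h])_m = r : r is the supremum (in nat, sup of empty set = 0) of the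
   mode-m ranks of the tensors of S[h]. *)
Definition Frank_mode (R : fieldType) (h : R -> R -> R -> R) (X Y Z : set R)
  (m : nat) (r : nat) : Prop :=
  Frank_le h X Y Z m r /\ forall b, Frank_le h X Y Z m b -> (r <= b)%N.

Definition Frank (R : fieldType) (h : R -> R -> R -> R) (X Y Z : set R)
  (r1 r2 r3 : nat) : Prop :=
  [/\ Frank_mode h X Y Z 1 r1, Frank_mode h X Y Z 2 r2 & Frank_mode h X Y Z 3 r3].

Definition bounded3 (R : realType) (h : R -> R -> R -> R) (X Y Z : set R) : Prop :=
  exists M : R, forall v1 v2 v3, X v1 -> Y v2 -> Z v3 -> `|h v1 v2 v3| <= M.

Definition boundedv (R : realType) (r : nat) (g : R -> 'rV[R]_r) (X : set R) : Prop :=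
  exists M : R, forall v, X v -> forall i, `|g v 0 i| <= M.

From mathcomp Require Import all_boot all_order all_algebra.
From mathcomp Require Import boolp classical_sets reals.
From mathcomp Require Import ring.
Set Implicit Arguments. Unset Strict Implicit. Unset Printing Implicit Defensive.
Import Order.TTheory GRing.Theory Num.Theory.
Local Open Scope ring_scope.

(* View f along one mode as a function of that variable and of the pair of
   the other two; the mode rank is then the supremum r of the ranks of the
   finite sample matrices [f (x_i) (c_j)].  When r is finite it is attained,
   so some r x r sample G at points xs, ys is invertible.  Bordering G by one
   more sample row and column cannot raise the rank, hence the Schur
   complement vanishes: f v c = row(v) G^-1 col(c), i.e. f v = sum_i al_i(v)
   f (xs i) with al(v) = row(v) G^-1, bounded whenever f is.  Expanding f in
   this way in all three modes yields the core tensor C = f(xs, ys, zs).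
   Conversely, a function sum_i phi v i * psi i c has all its sample matrices
   factor through r columns, so their rank is at most r. *)

Lemma mxrank_colsub (F : fieldType) m n n' (g : 'I_n' -> 'I_n) (A : 'M[F]_(m, n)) :
  (\rank (colsub g A) <= \rank A)%N.
Proof. by rewrite -[A in colsub _ A]mulmx1 -mulmx_colsub mxrankM_maxl. Qed.

Lemma exists_unit_mxsub (F : fieldType) m n (A : 'M[F]_(m, n)) :
  exists (f : 'I_(\rank A) -> 'I_m) (g : 'I_(\rank A) -> 'I_n), mxsub f g A \in unitmx.
Proof.
have rowsT_full : row_full (rowsub (maxrankfun A) A)^T.
  by rewrite /row_full mxrank_tr; apply: maxrowsub_free.
exists (maxrankfun A), (fullrankfun rowsT_full).
rewrite -unitmx_tr; congr (_ \in unitmx): (fullrowsub_unit rowsT_full).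
by apply/matrixP => i j; rewrite !mxE.
Qed.

(* The top block row already has rank r, so the bottom rows lie in its span. *)
Lemma block_mx_rank_le_schur (F : fieldType) r m n (G : 'M[F]_r)
    (U : 'M_(r, n)) (W : 'M_(m, r)) (D : 'M_(m, n)) :
  G \in unitmx -> (\rank (block_mx G U W D) <= r)%N -> D = W *m invmx G *m U.
Proof.
move=> Gu; rewrite /block_mx => rk_le.
have rk_top : (r <= \rank (row_mx G U))%N.
  apply: leq_trans (mxrankM_maxl _ (col_mx 1%:M 0 : 'M_(r + n, r))).
  by rewrite mul_row_col mulmx1 mulmx0 addr0 mxrank_unit.
have top_sub : (row_mx G U <= col_mx (row_mx G U) (row_mx W D))%MS.
  by rewrite -addsmxE addsmxSl.
have /submxP [E] : (row_mx W D <= row_mx G U)%MS.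
  have := (mxrank_leqif_sup top_sub).2.
  rewrite eqn_leq mxrankS //= (leq_trans rk_le rk_top) => /esym.
  by rewrite col_mx_sub => /andP [].
by rewrite mul_mx_row => /eq_row_mx [-> ->]; rewrite mulmxK.
Qed.

Section SampleMatrices.
Variables (F : fieldType) (A B : Type) (h : A -> B -> F) (P : set A) (Q : set B).

Definition sample_mx m n (xs : 'I_m -> A) (ys : 'I_n -> B) : 'M[F]_(m, n) :=
  \matrix_(i, j) h (xs i) (ys j).

Definition sample_rank_le (r : nat) : Prop :=
  forall m n (xs : 'I_m -> A) (ys : 'I_n -> B),
    (forall i, P (xs i)) -> (forall j, Q (ys j)) -> (\rank (sample_mx xs ys) <= r)%N.

Definition sample_rank (r : nat) : Prop :=
  sample_rank_le r /\ forall b, sample_rank_le b -> (r <= b)%N.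

Lemma sample_rank_le_sum r (phi : A -> 'I_r -> F) (psi : 'I_r -> B -> F) :
  (forall v c, P v -> Q c -> h v c = \sum_i phi v i * psi i c) -> sample_rank_le r.
Proof.
move=> hE m n xs ys Pxs Qys.
have -> : sample_mx xs ys = \matrix_(k, i) phi (xs k) i *m \matrix_(i, l) psi i (ys l).
  by apply/matrixP => k l; rewrite !mxE hE //; apply: eq_bigr => i _; rewrite !mxE.
exact: leq_trans (mxrankM_maxl _ _) (rank_leq_col _).
Qed.

Lemma sample_rank_attained r : sample_rank r ->
  exists m n (xs : 'I_m -> A) (ys : 'I_n -> B),
    [/\ forall i, P (xs i), forall j, Q (ys j) & \rank (sample_mx xs ys) = r].
Proof.
case=> rk_le rk_min; apply: contrapT => none_attained.
case: r rk_le rk_min none_attained => [|r] rk_le rk_min none_attained.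
  have xs0 : 'I_0 -> A by case.
  have ys0 : 'I_0 -> B by case.
  apply: none_attained; exists 0%N, 0%N, xs0, ys0.
  by split; [case | case | apply/eqP; rewrite -leqn0 rank_leq_row].
suff /rk_min : sample_rank_le r by rewrite ltnn.
move=> m n xs ys Pxs Qys; rewrite -ltnS ltn_neqAle rk_le // andbT.
by apply/eqP => rk_eq; apply: none_attained; exists m, n, xs, ys.
Qed.

Lemma sample_rank_unit r : sample_rank r ->
  exists (xs : 'I_r -> A) (ys : 'I_r -> B),
    [/\ forall i, P (xs i), forall j, Q (ys j) & sample_mx xs ys \in unitmx].
Proof.
move/sample_rank_attained => [m [n [xs [ys [Pxs Qys <-]]]]].
have [f [g unit_fg]] := exists_unit_mxsub (sample_mx xs ys).
exists (xs \o f), (ys \o g); split=> [i | j |]; [exact: Pxs | exact: Qys |].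
suff -> : sample_mx (xs \o f) (ys \o g) = mxsub f g (sample_mx xs ys) by [].
by apply/matrixP => i j; rewrite !mxE.
Qed.

Variables (r : nat) (xs : 'I_r -> A) (ys : 'I_r -> B).

Definition interp_coef (v : A) : 'rV[F]_r :=
  \row_j h v (ys j) *m invmx (sample_mx xs ys).

Lemma sample_interp : sample_rank_le r ->
  (forall i, P (xs i)) -> (forall j, Q (ys j)) -> sample_mx xs ys \in unitmx ->
  forall v c, P v -> Q c -> h v c = \sum_i interp_coef v 0 i * h (xs i) c.
Proof.
move=> rk_le Pxs Qys G_unit v c Pv Qc.
pose xs' (i : 'I_(r + 1)) := if split i is inl k then xs k else v.
pose ys' (j : 'I_(r + 1)) := if split j is inl l then ys l else c.
have xs'_l k : xs' (lshift 1 k) = xs k by rewrite /xs' (unsplitK (inl k)).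
have ys'_l l : ys' (lshift 1 l) = ys l by rewrite /ys' (unsplitK (inl l)).
have xs'_r k : xs' (rshift r k) = v by rewrite /xs' (unsplitK (inr k)).
have ys'_r l : ys' (rshift r l) = c by rewrite /ys' (unsplitK (inr l)).
have Pxs' i : P (xs' i) by rewrite /xs'; case: split.
have Qys' j : Q (ys' j) by rewrite /ys'; case: split.
have := rk_le _ _ xs' ys' Pxs' Qys'.
rewrite -(submxK (sample_mx xs' ys')).
have -> : ulsubmx (sample_mx xs' ys') = sample_mx xs ys.
  by apply/matrixP => i j; rewrite !mxE xs'_l ys'_l.
move=> /(block_mx_rank_le_schur G_unit) /matrixP /(_ 0 0).
rewrite !mxE xs'_r ys'_r => ->; apply: eq_bigr => i _.
rewrite !mxE xs'_l ys'_r; congr (_ * _).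
by apply: eq_bigr => j _; rewrite !mxE xs'_r ys'_l.
Qed.

End SampleMatrices.

Lemma boundedv_mulmx (R : realType) r s (g : R -> 'rV[R]_r) (A : 'M[R]_(r, s)) X :
  boundedv g X -> boundedv (fun v => g v *m A) X.
Proof.
case=> M gM; exists (\sum_i \sum_j `|M| * `|A j i|) => v Xv i.
rewrite mxE; apply: le_trans (ler_norm_sum _ _ _) _.
apply: (@le_trans _ _ (\sum_j `|M| * `|A j i|)).
  apply: ler_sum => j _; rewrite normrM ler_wpM2r //.
  exact: le_trans (gM v Xv j) (ler_norm M).
rewrite (bigD1 i) //= lerDl.
by apply: sumr_ge0 => k _; apply: sumr_ge0 => j _; apply: mulr_ge0.
Qed.

Lemma sample_rank_factor (R : realType) B (h : R -> B -> R) (P : set R) (Q : set B) r :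
  (exists M, forall v c, P v -> Q c -> `|h v c| <= M) -> sample_rank h P Q r ->
  exists (xs : 'I_r -> R) (al : R -> 'rV[R]_r),
    [/\ forall i, P (xs i), boundedv al P &
        forall v c, P v -> Q c -> h v c = \sum_i al v 0 i * h (xs i) c].
Proof.
move=> [M hM] rk; have [xs [ys [Pxs Qys G_unit]]] := sample_rank_unit rk.
exists xs, (interp_coef h xs ys); split=> //.
  by apply: boundedv_mulmx; exists M => v Pv j; rewrite mxE hM.
exact: sample_interp (proj1 rk) Pxs Qys G_unit.
Qed.

Definition mode1_fun (T : Type) (f : T -> T -> T -> T) (v : T) (c : T * T) : T :=
  f v c.1 c.2.

Lemma Frank_le1_sample (F : fieldType) (f : F -> F -> F -> F) (X Y Z : set F) r :
  Frank_le f X Y Z 1 r <-> sample_rank_le (mode1_fun f) X (Y `*` Z) r.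
Proof.
split=> [rk_le m n xs cs Xxs YZcs | rk_le n1 n2 n3 T].
  case: m xs Xxs => [|m] xs Xxs; first exact: leq_trans (rank_leq_row _) _.
  case: n cs YZcs => [|n] cs YZcs; first exact: leq_trans (rank_leq_col _) _.
  pose T : tensor F m.+1 n.+1 n.+1 := fun i j k => f (xs i) (cs j).1 (cs k).2.
  have sampled_T : sampled f X Y Z T.
    split=> //; exists xs, (fun j => (cs j).1), (fun k => (cs k).2).
    by split=> // j; have [] := YZcs j.
  (* the sample matrix is the diagonal [j = k] part of the unfolding of T *)
  have -> : sample_mx (mode1_fun f) xs cs = colsub (fun j => mxvec_index j j) (unfold1 T).
    by apply/matrixP => i j; rewrite !mxE mxvecE mxE.
  exact: leq_trans (mxrank_colsub _ _) (rk_le _ _ _ T sampled_T).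
case=> _ _ _ [x [y [z [Xx Yy Zz TE]]]]; rewrite /mode_rank.
have [dec decK _] := curry_mxvec_bij n2 n3.
pose cs c := (y (dec c).1, z (dec c).2).
have -> : unfold1 T = sample_mx (mode1_fun f) x cs.
  apply/matrixP => i c; case/mxvec_indexP: c => j k.
  by rewrite !mxE mxvecE mxE /cs (decK (j, k)) // TE.
by apply: rk_le => // c; split; [apply: Yy | apply: Zz].
Qed.

(* The mode-2 (resp. mode-3) unfolding of T is convertible to the mode-1
   unfolding of T with its indices permuted. *)
Lemma Frank_le2_swap (F : fieldType) (f : F -> F -> F -> F) (X Y Z : set F) r :
  Frank_le f X Y Z 2 r <-> Frank_le (fun v2 v1 v3 => f v1 v2 v3) Y X Z 1 r.
Proof.
by split=> rk_le n1 n2 n3 T [? ? ? [x [y [z [? ? ? ?]]]]];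
  apply: (rk_le _ _ _ (fun j i k => T i j k)); split=> //; exists y, x, z.
Qed.

Lemma Frank_le3_rot (F : fieldType) (f : F -> F -> F -> F) (X Y Z : set F) r :
  Frank_le f X Y Z 3 r <-> Frank_le (fun v3 v1 v2 => f v1 v2 v3) Z X Y 1 r.
Proof.
split=> rk_le n1 n2 n3 T [? ? ? [x [y [z [? ? ? ?]]]]].
  by apply: (rk_le _ _ _ (fun j k i => T i j k)); split=> //; exists y, z, x.
by apply: (rk_le _ _ _ (fun k i j => T i j k)); split=> //; exists z, x, y.
Qed.

Lemma Frank_mode_transfer (F : fieldType) (f g : F -> F -> F -> F)
    (X Y Z X' Y' Z' : set F) m m' r :
  (forall b, Frank_le f X Y Z m b <-> Frank_le g X' Y' Z' m' b) ->
  Frank_mode f X Y Z m r -> Frank_mode g X' Y' Z' m' r.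
Proof. by move=> fg [rk_le rk_min]; split=> [|b /fg]; [apply/fg | apply: rk_min]. Qed.

Lemma Frank_mode1_factor (R : realType) (f : R -> R -> R -> R) (X Y Z : set R) r :
  bounded3 f X Y Z -> Frank_mode f X Y Z 1 r ->
  exists (xs : 'I_r -> R) (al : R -> 'rV[R]_r),
    [/\ forall i, X (xs i), boundedv al X &
        forall v1 v2 v3, X v1 -> Y v2 -> Z v3 -> f v1 v2 v3 = \sum_i al v1 0 i * f (xs i) v2 v3].
Proof.
move=> [M fM] [rk_le rk_min].
have rk : sample_rank (mode1_fun f) X (Y `*` Z) r.
  by split=> [|b /Frank_le1_sample]; [apply/Frank_le1_sample | apply: rk_min].
have [|xs [al [Xxs bal fE]]] := sample_rank_factor _ rk.
  by exists M => v [v2 v3] Xv [Yv2 Zv3]; apply: fM.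
by exists xs, al; split=> // v1 v2 v3 Xv1 Yv2 Zv3; apply: (fE v1 (v2, v3)).
Qed.

Lemma ttm3_swap12 (R : comNzRingType) r1 r2 r3 (C : tensor R r1 r2 r3) a b c :
  ttm3 C a b c = ttm3 (fun j i k => C i j k) b a c.
Proof.
rewrite /ttm3 exchange_big; apply: eq_bigr => j _; apply: eq_bigr => i _.
by apply: eq_bigr => k _; ring.
Qed.

Lemma ttm3_rot (R : comNzRingType) r1 r2 r3 (C : tensor R r1 r2 r3) a b c :
  ttm3 C a b c = ttm3 (fun k i j => C i j k) c a b.
Proof.
rewrite /ttm3; under eq_bigr => i _ do rewrite exchange_big /=.
rewrite exchange_big; apply: eq_bigr => k _; apply: eq_bigr => i _.
by apply: eq_bigr => j _; ring.
Qed.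

Lemma Frank_le1_ttm3 (F : fieldType) r1 r2 r3 (C : tensor F r1 r2 r3)
    (gx : F -> 'rV[F]_r1) (gy : F -> 'rV[F]_r2) (gz : F -> 'rV[F]_r3)
    (f : F -> F -> F -> F) (X Y Z : set F) :
  (forall v1 v2 v3, f v1 v2 v3 = ttm3 C (gx v1) (gy v2) (gz v3)) -> Frank_le f X Y Z 1 r1.
Proof.
move=> fE; apply/Frank_le1_sample.
apply: (sample_rank_le_sum (phi := fun v i => gx v 0 i)
  (psi := fun i c => \sum_j \sum_k C i j k * gy c.1 0 j * gz c.2 0 k)) => v c _ _.
rewrite /mode1_fun fE /ttm3; apply: eq_bigr => i _.
rewrite mulr_sumr; apply: eq_bigr => j _.
by rewrite mulr_sumr; apply: eq_bigr => k _; ring.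
Qed.

Lemma tucker_of_mode_expansions (R : comNzRingType) r1 r2 r3 (f : R -> R -> R -> R)
    (X Y Z : set R) (xs : 'I_r1 -> R) (ys : 'I_r2 -> R) (zs : 'I_r3 -> R)
    (al : R -> 'rV[R]_r1) (be : R -> 'rV[R]_r2) (ga : R -> 'rV[R]_r3) :
  (forall i, X (xs i)) -> (forall j, Y (ys j)) ->
  (forall v1 v2 v3, X v1 -> Y v2 -> Z v3 -> f v1 v2 v3 = \sum_i al v1 0 i * f (xs i) v2 v3) ->
  (forall v1 v2 v3, X v1 -> Y v2 -> Z v3 -> f v1 v2 v3 = \sum_j be v2 0 j * f v1 (ys j) v3) ->
  (forall v1 v2 v3, X v1 -> Y v2 -> Z v3 -> f v1 v2 v3 = \sum_k ga v3 0 k * f v1 v2 (zs k)) ->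
  forall v1 v2 v3, X v1 -> Y v2 -> Z v3 ->
    f v1 v2 v3 = ttm3 (fun i j k => f (xs i) (ys j) (zs k)) (al v1) (be v2) (ga v3).
Proof.
move=> Xxs Yys fE1 fE2 fE3 v1 v2 v3 Xv1 Yv2 Zv3.
rewrite fE1 // /ttm3; apply: eq_bigr => i _.
rewrite fE2 // mulr_sumr; apply: eq_bigr => j _.
by rewrite fE3 // !mulr_sumr; apply: eq_bigr => k _; ring.
Qed.

Theorem theorem2 (R : realType) :
  (* (i) *)
  (forall (Xf Yf Zf : set R) (f : R -> R -> R -> R) (r1 r2 r3 : nat),
     bounded3 f Xf Yf Zf ->
     Frank f Xf Yf Zf r1 r2 r3 ->
     exists (C : tensor R r1 r2 r3) (fx : R -> 'rV[R]_r1)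
            (fy : R -> 'rV[R]_r2) (fz : R -> 'rV[R]_r3),
       [/\ boundedv fx Xf, boundedv fy Yf, boundedv fz Zf &
           forall v1 v2 v3, Xf v1 -> Yf v2 -> Zf v3 ->
             f v1 v2 v3 = ttm3 C (fx v1) (fy v2) (fz v3)]) /\
  (* (ii) *)
  (forall (r1 r2 r3 : nat) (C : tensor R r1 r2 r3) (Xg Yg Zg : set R)
          (gx : R -> 'rV[R]_r1) (gy : R -> 'rV[R]_r2) (gz : R -> 'rV[R]_r3),
     boundedv gx Xg -> boundedv gy Yg -> boundedv gz Zg ->
     let g := fun v1 v2 v3 => ttm3 C (gx v1) (gy v2) (gz v3) in
     [/\ Frank_le g Xg Yg Zg 1 r1, Frank_le g Xg Yg Zg 2 r2 & Frank_le g Xg Yg Zg 3 r3]).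
Proof.
split=> [X Y Z f r1 r2 r3 fb [rk1 rk2 rk3] | r1 r2 r3 C X Y Z gx gy gz _ _ _ g].
  have [xs [al [Xxs bal fE1]]] := Frank_mode1_factor fb rk1.
  have [M fM] := fb.
  have [|ys [be [Yys bbe fE2]]] :=
    Frank_mode1_factor _ (Frank_mode_transfer (Frank_le2_swap f X Y Z) rk2).
    by exists M => v2 v1 v3 Yv2 Xv1 Zv3; apply: fM.
  have [|zs [ga [Zzs bga fE3]]] :=
    Frank_mode1_factor _ (Frank_mode_transfer (Frank_le3_rot f X Y Z) rk3).
    by exists M => v3 v1 v2 Zv3 Xv1 Yv2; apply: fM.
  exists (fun i j k => f (xs i) (ys j) (zs k)), al, be, ga; split=> //.
  by apply: tucker_of_mode_expansions => // v1 v2 v3 Xv1 Yv2 Zv3; [apply: fE2 | apply: fE3].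
split; first exact: Frank_le1_ttm3.
  by apply/Frank_le2_swap; apply: (Frank_le1_ttm3 (gx := gy) (gy := gx)) => v2 v1 v3;
    apply: ttm3_swap12.
by apply/Frank_le3_rot; apply: (Frank_le1_ttm3 (gx := gz) (gy := gx) (gz := gy)) => v3 v1 v2;
  apply: ttm3_rot.
Qed.
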